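(* Let $R$ be a commutative ring and $A$ an associative unital algebra in the symmetric monoidal category of pro-$R$-modules, such that the underlying pro-$R$-module of $A$ is Mittag-Leffler. Then (1) $A$ can be represented as a cofiltered limit $A=\lim A_\alpha$ of $R$-algebras $A_\alpha$ with surjective transition maps; (2) if $A$ is pro-finite as a pro-$R$-module, the $A_\alpha$ can be chosen to be finitely generated $R$-modules; (3) if $A$ is commutative (resp. commutative and pro-finite), the $A_\alpha$ can be chosen commutative (resp. commutative and finitely generated as $R$-modules).
   Context: Pro-$R$-modules are formal cofiltered limits $\lim N_\alpha$ of $R$-modules (the pro-completion of $\mathrm{Mod}_R$), with symmetric monoidal structure $(\lim M_\alpha)\otimes(\lim N_\beta)=\lim(M_\alpha\otimes N_\beta)$. A pro-module is Mittag-Leffler if it admits a presentation $\lim N_\alpha$ with surjective transition maps (equivalently, in every presentation the images $\varphi_{\alpha\beta}(N_\beta)\subseteq N_\alpha$ stabilize as $\beta$ grows). It is pro-finite if it admits a presentation with all $N_\alpha$ finitely generated. *)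

(* Pro-R-modules are formalized as formal cofiltered limits
   indexed by codirected preorders; morphisms out of tensor products are
   encoded by multilinear maps (universal property of the tensor product). *)
From HB Require Import structures.
From mathcomp Require Import all_boot all_order all_algebra.
Unset Strict Implicit.
Unset Printing Implicit Defensive.
Import GRing.Theory.
Local Open Scope ring_scope.

Section ProModules.
Variable R : comPzRingType.

Record proSys := ProSys {
  idx : Type;
  le : idx -> idx -> Prop;
  le_refl : forall i, le i i;
  le_trans : forall i j k, le i j -> le j k -> le i k;
  codir : forall i j, exists k, le k i /\ le k j;
  idx_inh : inhabited idx;
  obj : idx -> lmodType R;
  tr : forall i j, le i j -> obj i -> obj j;
  tr_lin : forall i j (h : le i j) (a : R) (x y : obj i),
      tr i j h (a *: x + y) = a *: tr i j h x + tr i j h y;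
  tr_id : forall i (h : le i i) (x : obj i), tr i i h x = x;
  tr_comp : forall i j k (h1 : le i j) (h2 : le j k) (h3 : le i k) (x : obj i),
      tr j k h2 (tr i j h1 x) = tr i k h3 x
}.

Arguments le {p} i j.
Arguments obj {p} i.
Arguments tr {p i j} h x.

(** Equality of germs (equality in the colimit over the source index) of
    maps / bilinear maps / trilinear maps out of levels of [M]. *)
Definition germ1 (M : proSys) (Y : Type) (i1 i2 : idx M)
    (f1 : obj i1 -> Y) (f2 : obj i2 -> Y) : Prop :=
  exists k (h1 : le k i1) (h2 : le k i2),
    forall x : obj k, f1 (tr h1 x) = f2 (tr h2 x).

Definition germ2 (M : proSys) (Y : Type) (i1 i2 j1 j2 : idx M)
    (f1 : obj i1 -> obj i2 -> Y) (f2 : obj j1 -> obj j2 -> Y) : Prop :=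
  exists k (h1 : le k i1) (h2 : le k i2) (g1 : le k j1) (g2 : le k j2),
    forall x y : obj k, f1 (tr h1 x) (tr h2 y) = f2 (tr g1 x) (tr g2 y).

Definition germ3 (M : proSys) (Y : Type) (i1 i2 i3 j1 j2 j3 : idx M)
    (f1 : obj i1 -> obj i2 -> obj i3 -> Y)
    (f2 : obj j1 -> obj j2 -> obj j3 -> Y) : Prop :=
  exists k (h1 : le k i1) (h2 : le k i2) (h3 : le k i3)
    (g1 : le k j1) (g2 : le k j2) (g3 : le k j3),
    forall x y z : obj k,
      f1 (tr h1 x) (tr h2 y) (tr h3 z) = f2 (tr g1 x) (tr g2 y) (tr g3 z).

Arguments germ1 {M Y i1 i2} f1 f2.
Arguments germ2 {M Y i1 i2 j1 j2} f1 f2.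
Arguments germ3 {M Y i1 i2 i3 j1 j2 j3} f1 f2.

(** A morphism of pro-modules  M -> N : an element of
    lim_j colim_i Hom_R(M_i, N_j), given by representatives. *)
Record proHom (M N : proSys) := ProHom {
  hidx : idx N -> idx M;
  hmap : forall j, obj (hidx j) -> obj j;
  hmap_lin : forall j (a : R) (x y : obj (hidx j)),
      hmap j (a *: x + y) = a *: hmap j x + hmap j y;
  hmap_compat : forall j j' (h : le j' j),
      germ1 (fun x => tr h (hmap j' x)) (hmap j)
}.

Arguments hidx {M N} p j.
Arguments hmap {M N} p j x.

Definition proInverse {M N : proSys} (phi : proHom M N) (psi : proHom N M) :=
  (forall i : idx M,
     germ1 (fun x => hmap psi i (hmap phi (hidx psi i) x)) (fun x : obj i => x))
  /\ (forall j : idx N,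
     germ1 (fun x => hmap phi j (hmap psi (hidx phi j) x)) (fun x : obj j => x)).

Definition proIso (M N : proSys) : Prop :=
  exists (phi : proHom M N) (psi : proHom N M), proInverse phi psi.

Definition surj_trans (N : proSys) : Prop :=
  forall (i j : idx N) (h : le i j) (y : obj j), exists x, tr h x = y.

Definition mittag_leffler (M : proSys) : Prop :=
  exists N : proSys, surj_trans N /\ proIso M N.

Definition fin_gen (V : lmodType R) : Prop :=
  exists (n : nat) (v : 'I_n -> V),
    forall x : V, exists c : 'I_n -> R, x = \sum_(k < n) c k *: v k.

Definition pro_finite (M : proSys) : Prop :=
  exists N : proSys, (forall i : idx N, fin_gen (obj i)) /\ proIso M N.

(** Multiplication A (x) A -> A : for each d, a bilinear representative
    A_{midx d} x A_{midx d} -> A_d (diagonal indices are cofinal in idx*idx),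
    compatible in d.  Unit R -> A : a compatible family of elements. *)
Record proAlg := ProAlg {
  asys :> proSys;
  midx : idx asys -> idx asys;
  mul : forall d, obj (midx d) -> obj (midx d) -> obj d;
  mul_linl : forall d (a : R) x y z,
      mul d (a *: x + y) z = a *: mul d x z + mul d y z;
  mul_linr : forall d (a : R) x y z,
      mul d z (a *: x + y) = a *: mul d z x + mul d z y;
  mul_compat : forall d d' (h : le d' d),
      germ2 (fun x y => tr h (mul d' x y)) (mul d);
  aunit : forall d, obj d;
  aunit_compat : forall d d' (h : le d' d), tr h (aunit d') = aunit d;
  mul_assoc : forall d,
      germ3 (fun x y z => mul d (mul (midx d) x y) z)
            (fun x y z => mul d x (mul (midx d) y z));
  mul_1l : forall d,
      germ1 (fun x => mul d (aunit (midx d)) x) (fun x : obj d => x);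
  mul_1r : forall d,
      germ1 (fun x => mul d x (aunit (midx d))) (fun x : obj d => x)
}.

Arguments midx p d.
Arguments mul p d x y.
Arguments aunit p d.

Definition proAlg_comm (A : proAlg) : Prop :=
  forall d, germ2 (fun x y => mul A d x y) (fun x y => mul A d y x).

(** An R-algebra is an R-module with an
    R-bilinear, associative multiplication with a two-sided unit (the zero
    algebra is allowed, unlike MathComp's [algType], whose rings are
    nontrivial). *)
Record algSys := AlgSys {
  bidx : Type;
  ble : bidx -> bidx -> Prop;
  ble_refl : forall i, ble i i;
  ble_trans : forall i j k, ble i j -> ble j k -> ble i k;
  bcodir : forall i j, exists k, ble k i /\ ble k j;
  bidx_inh : inhabited bidx;
  balg : bidx -> lmodType R;
  bmul : forall i, balg i -> balg i -> balg i;
  bone : forall i, balg i;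
  bmul_linl : forall i (a : R) (x y z : balg i),
      bmul i (a *: x + y) z = a *: bmul i x z + bmul i y z;
  bmul_linr : forall i (a : R) (x y z : balg i),
      bmul i z (a *: x + y) = a *: bmul i z x + bmul i z y;
  bmul_assoc : forall i (x y z : balg i),
      bmul i (bmul i x y) z = bmul i x (bmul i y z);
  bmul_1l : forall i (x : balg i), bmul i (bone i) x = x;
  bmul_1r : forall i (x : balg i), bmul i x (bone i) = x;
  btr : forall i j, ble i j -> balg i -> balg j;
  btr_lin : forall i j (h : ble i j) (a : R) (x y : balg i),
      btr i j h (a *: x + y) = a *: btr i j h x + btr i j h y;
  btr_mul : forall i j (h : ble i j) (x y : balg i),
      btr i j h (bmul i x y) = bmul j (btr i j h x) (btr i j h y);
  btr_one : forall i j (h : ble i j), btr i j h (bone i) = bone j;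
  btr_id : forall i (h : ble i i) (x : balg i), btr i i h x = x;
  btr_comp : forall i j k (h1 : ble i j) (h2 : ble j k) (h3 : ble i k)
      (x : balg i), btr j k h2 (btr i j h1 x) = btr i k h3 x
}.

Arguments btr {_ _ _} _ _.

Definition sysOf (B : algSys) : proSys :=
  @ProSys (bidx B) (@ble B) (@ble_refl B) (@ble_trans B) (@bcodir B)
    (@bidx_inh B) (balg B) (fun i j h => btr h)
    (@btr_lin B) (@btr_id B) (@btr_comp B).

Definition alg_surj (B : algSys) : Prop :=
  forall i j (h : ble B i j) (y : balg B j), exists x, btr h x = y.

Definition alg_fin_gen (B : algSys) : Prop :=
  forall i, fin_gen (balg B i).

Definition alg_comm (B : algSys) : Prop :=
  forall i (x y : balg B i), bmul B i x y = bmul B i y x.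

Definition proAlgIso (A : proAlg) (B : algSys) : Prop :=
  exists (phi : proHom A (sysOf B)) (psi : proHom (sysOf B) A),
    proInverse phi psi
    /\ (forall j : bidx B,
          germ2 (fun x y => (hmap phi j (mul A (hidx phi j) x y) : balg B j))
                (fun x y => bmul B j (hmap phi j x) (hmap phi j y)))
    /\ (forall j : bidx B, (hmap phi j (aunit A (hidx phi j)) : balg B j) = bone B j).

End ProModules.

Arguments asys {R} p.
Arguments mittag_leffler {R} M.
Arguments pro_finite {R} M.
Arguments proAlg_comm {R} A.
Arguments alg_surj {R} B.
Arguments alg_fin_gen {R} B.
Arguments alg_comm {R} B.
Arguments proAlgIso {R} A B.

(* Mittag-Leffler gives, below every index [i], an index [sidx i] whose image
   [E_i] in [A_i] is the image of every deeper level; the [E_i] present [A]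
   with surjective transitions.  They are not algebras, since the product only
   lands in [E_d] from deeper levels.  So at level [d] we take a deep enough
   index [base d] and pass to the quotient [B_d] of [E_(base d)] by the [x]
   with [y x w = 0] in [A_d] for all [y, w] in [E_(base d)].  Associativity,
   which holds at deep enough levels, makes this kernel a two-sided ideal
   compatible with the transitions, so the [B_d] form a cofiltered system of
   algebras with surjective transitions, and [x |-> class of x] and
   [f |-> f (1, 1)] are inverse isomorphisms between [A] and [lim B_d].  Being
   quotients of the [E_i], the [B_d] are finitely generated when [A] is
   pro-finite, and they are commutative when [A] is. *)

From HB Require Import structures.
From mathcomp Require Import all_boot all_order all_algebra.
From mathcomp Require Import boolp classical_sets functions.
From Pilot Require Import Defs.
Import GRing.Theory.
Local Open Scope ring_scope.
Set Implicit Arguments.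
Unset Strict Implicit.

Section SubmoduleOfPred.
Variables (R : pzRingType) (V : lmodType R) (P : V -> Prop).
Hypotheses (P0 : P 0) (P_lin : forall a u v, P u -> P v -> P (a *: u + v)).

Definition subspace_pred : pred V := fun v => `[< P v >].

Record subspace :=
  Subspace { subspace_val : V; subspace_valP : subspace_pred subspace_val }.
HB.instance Definition _ := [isSub for subspace_val].
HB.instance Definition _ := [Choice of subspace by <:].

Lemma predP_submod_closed : submod_closed subspace_pred.
Proof.
split; first exact/asboolP.
by move=> a u v /asboolP Pu /asboolP Pv; apply/asboolP; apply: P_lin.
Qed.

HB.instance Definition _ :=
  GRing.isSubmodClosed.Build R V subspace_pred predP_submod_closed.
HB.instance Definition _ := [SubChoice_isSubLmodule of subspace by <:].

Definition subspaceLmod : lmodType R := subspace.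

End SubmoduleOfPred.

Arguments subspaceLmod {R V P} P0 P_lin.

Section LinearFun.
Variables (R : pzRingType) (U V : lmodType R) (f : U -> V).
Hypothesis f_lin : linear f.

Let fL : {linear U -> V} := HB.pack f (GRing.isLinear.Build R U V *:%R f f_lin).

Lemma lin0 : f 0 = 0.
Proof. exact: (linear0 fL). Qed.

Lemma linB x y : f (x - y) = f x - f y.
Proof. exact: (linearB fL). Qed.

Lemma lin_sumZ n (c : 'I_n -> R) (v : 'I_n -> U) :
  f (\sum_(k < n) c k *: v k) = \sum_(k < n) c k *: f (v k).
Proof. by rewrite -[f _]/(fL _) linear_sum; apply: eq_bigr => k _; apply: linearZ. Qed.

End LinearFun.

Section ProModule.
Variables (R : comPzRingType) (M : proSys R).
Local Notation I := (idx R M).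
Local Notation Ob i := (obj R M i).
Local Notation lev := (Defs.le R M).

Lemma lev_refl i : lev i i. Proof. exact: Defs.le_refl. Qed.
Lemma lev_trans i j k : lev i j -> lev j k -> lev i k. Proof. exact: Defs.le_trans. Qed.
Local Hint Resolve lev_refl : core.

(* The transition map made total, with junk value [0] when [~ lev i j]. *)
Definition trans (i j : I) (x : Ob i) : Ob j :=
  if pselect (lev i j) is left h then tr R M i j h x else 0.
Arguments trans : clear implicits.

Lemma transE i j (h : lev i j) x : trans i j x = tr R M i j h x.
Proof.
by rewrite /trans; case: pselect => [h'|//]; rewrite (Prop_irrelevance h' h).
Qed.

Lemma trans_lin i j : linear (trans i j).
Proof.
by move=> a x y; rewrite /trans; case: pselect => h; rewrite ?tr_lin ?scaler0 ?addr0.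
Qed.

Lemma trans0 i j : trans i j 0 = 0. Proof. exact: lin0 (@trans_lin i j). Qed.

Lemma transB i j x y : trans i j (x - y) = trans i j x - trans i j y.
Proof. exact: (linB (@trans_lin i j)). Qed.

Lemma trans_id i x : trans i i x = x.
Proof. by rewrite (transE (lev_refl i)) tr_id. Qed.

Lemma trans_comp i j k x : lev i j -> lev j k -> trans j k (trans i j x) = trans i k x.
Proof.
move=> h1 h2; rewrite (transE h1) (transE h2) (transE (lev_trans h1 h2)).
exact: tr_comp.
Qed.

Definition lb (i j : I) : I := projT1 (cid (Defs.codir R M i j)).
Lemma lb_l i j : lev (lb i j) i. Proof. by rewrite /lb; case: cid => k []. Qed.
Lemma lb_r i j : lev (lb i j) j. Proof. by rewrite /lb; case: cid => k []. Qed.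

Definition eventually (P : I -> Prop) := exists k, forall p, lev p k -> P p.

Lemma eventually_and (P Q : I -> Prop) :
  eventually P -> eventually Q -> eventually (fun p => P p /\ Q p).
Proof.
move=> [k1 P1] [k2 Q2]; exists (lb k1 k2) => p hp; split.
  exact/P1/(lev_trans hp (lb_l _ _)).
exact/Q2/(lev_trans hp (lb_r _ _)).
Qed.

Lemma eventually_le i : eventually (fun p => lev p i).
Proof. by exists i. Qed.

Lemma eventually_ex P : eventually P -> exists p, P p.
Proof. by move=> [k Pk]; exists k; apply: Pk. Qed.

Lemma eventually_mono (P Q : I -> Prop) :
  eventually P -> (forall p, P p -> Q p) -> eventually Q.
Proof. by move=> [k Pk] PQ; exists k => p /Pk /PQ. Qed.

Lemma germ1_eventually Y i1 i2 (f1 : Ob i1 -> Y) (f2 : Ob i2 -> Y) :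
  germ1 R M Y i1 i2 f1 f2 -> eventually (fun p => lev p i1 /\ lev p i2 /\
    forall x : Ob p, f1 (trans p i1 x) = f2 (trans p i2 x)).
Proof.
move=> [k [h1 [h2 f12]]]; exists k => p hp.
split; [exact: lev_trans hp h1 | split; first exact: lev_trans hp h2].
move=> x; rewrite -(trans_comp x hp h1) -(trans_comp x hp h2).
by rewrite (transE h1) (transE h2) f12.
Qed.

Lemma germ2_eventually Y i1 i2 j1 j2
    (f1 : Ob i1 -> Ob i2 -> Y) (f2 : Ob j1 -> Ob j2 -> Y) :
  germ2 R M Y i1 i2 j1 j2 f1 f2 -> eventually (fun p =>
    [/\ lev p i1, lev p i2, lev p j1, lev p j2 &
    forall x y : Ob p, f1 (trans p i1 x) (trans p i2 y)
                     = f2 (trans p j1 x) (trans p j2 y)]).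
Proof.
move=> [k [h1 [h2 [g1 [g2 f12]]]]]; exists k => p hp.
split; try exact: lev_trans hp _.
move=> x y; rewrite -(trans_comp x hp h1) -(trans_comp y hp h2).
rewrite -(trans_comp x hp g1) -(trans_comp y hp g2).
by rewrite (transE h1) (transE h2) (transE g1) (transE g2) f12.
Qed.

Lemma germ3_eventually Y i1 i2 i3 j1 j2 j3
    (f1 : Ob i1 -> Ob i2 -> Ob i3 -> Y) (f2 : Ob j1 -> Ob j2 -> Ob j3 -> Y) :
  germ3 R M Y i1 i2 i3 j1 j2 j3 f1 f2 -> eventually (fun p =>
    [/\ lev p i1, lev p i2, lev p i3, lev p j1 & lev p j2] /\ lev p j3 /\
    forall x y z : Ob p, f1 (trans p i1 x) (trans p i2 y) (trans p i3 z)
                       = f2 (trans p j1 x) (trans p j2 y) (trans p j3 z)).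
Proof.
move=> [k [h1 [h2 [h3 [g1 [g2 [g3 f12]]]]]]]; exists k => p hp.
split; first by split; exact: lev_trans hp _.
split; first exact: lev_trans hp g3.
move=> x y z; rewrite -(trans_comp x hp h1) -(trans_comp y hp h2).
rewrite -(trans_comp z hp h3) -(trans_comp x hp g1) -(trans_comp y hp g2).
rewrite -(trans_comp z hp g3) (transE h1) (transE h2) (transE h3).
by rewrite (transE g1) (transE g2) (transE g3) f12.
Qed.

Record stable_index := StableIndex {
  sidx : I -> I;
  sidx_le : forall i, lev (sidx i) i;
  sidx_stable : forall i k, lev k (sidx i) -> forall z : Ob (sidx i),
    exists w : Ob k, trans k i w = trans (sidx i) i z
}.

Lemma mittag_leffler_stable_index : mittag_leffler M -> inhabited stable_index.
Proof.
move=> [N [N_surj [phi [psi [psi_phi _]]]]].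
suff /choice [s s_spec] : forall i, exists k, lev k i /\ forall k', lev k' k ->
    forall z : Ob k, exists w : Ob k', trans k' i w = trans k i z.
  by constructor; exists s => i; [case: (s_spec i) | case: (s_spec i)].
move=> i; have [k [h1 [h2 psi_phi_k]]] := psi_phi i.
exists k; split => // k' hk' z.
have hk'i := lev_trans hk' h2.
have [m [g1 [g2 psi_m]]] := hmap_compat R N M psi i k' hk'i.
have [v ev] := N_surj m _ g2 (hmap R M N phi _ (tr R M _ _ h1 z)).
exists (hmap R N M psi k' (tr R N _ _ g1 v)).
by rewrite (transE hk'i) psi_m ev (transE h2) -psi_phi_k.
Qed.

Variable S : stable_index.
Local Notation s := (sidx S).
Local Hint Resolve lb_l lb_r sidx_le : core.

Definition stable i (x : Ob i) := exists z : Ob (s i), trans (s i) i z = x.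

Lemma stable_sidx i (z : Ob (s i)) : stable (trans (s i) i z).
Proof. by exists z. Qed.

Lemma stable_lift i p x : stable x -> lev p i ->
  exists z : Ob p, stable z /\ trans p i z = x.
Proof.
move=> [z0 <-] hpi; have [w ew] := sidx_stable (lb_r (s p) (s i)) z0.
exists (trans (lb (s p) (s i)) p w); split.
  by exists (trans _ (s p) w); rewrite trans_comp.
by rewrite trans_comp //; apply: lev_trans (lb_l _ _) _.
Qed.

Lemma stable_trans j i (z : Ob j) : stable z -> lev j i -> stable (trans j i z).
Proof.
move=> z_st hji; have hq := lev_trans (lb_l (s j) (s i)) (sidx_le S j).
have [w [_ <-]] := stable_lift z_st hq.
by rewrite trans_comp //; exists (trans _ (s i) w); rewrite trans_comp.
Qed.

Lemma stable0 i : stable (0 : Ob i).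
Proof. by exists 0; rewrite trans0. Qed.

Lemma stable_lin i a (x y : Ob i) : stable x -> stable y -> stable (a *: x + y).
Proof. by move=> [z1 <-] [z2 <-]; exists (a *: z1 + z2); rewrite trans_lin. Qed.

Lemma stableB i (x y : Ob i) : stable x -> stable y -> stable (x - y).
Proof. by move=> x_st y_st; rewrite -scaleN1r addrC; apply: stable_lin. Qed.

Lemma stable_sum i n (c : 'I_n -> R) (g : 'I_n -> Ob i) :
  (forall k, stable (g k)) -> stable (\sum_(k < n) c k *: g k).
Proof.
move=> g_st; elim/big_ind: _ => [|u v u_st v_st|k _]; first exact: stable0.
  by rewrite -[u]scale1r; apply: stable_lin.
by rewrite -[_ *: _]addr0; apply: stable_lin => //; apply: stable0.
Qed.

Lemma pro_finite_stable_span : pro_finite M -> forall i,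
  exists n (g : 'I_n -> Ob i), (forall k, stable (g k)) /\
    forall x, stable x -> exists c : 'I_n -> R, x = \sum_(k < n) c k *: g k.
Proof.
move=> [N [N_fg [phi [psi [psi_phi _]]]]] i.
have [k0 [h1 [h2 psi_phi_k0]]] := psi_phi i.
have [m [g1 [g2 psi_m]]] := hmap_compat R N M psi i (sidx S i) (sidx_le S i).
have [k3 [e1 [e2 phi_k3]]] := hmap_compat R M N phi (hidx R N M psi i) m g2.
have [n [v v_span]] := N_fg m.
pose psi_m_i u := hmap R N M psi i (tr R N m _ g2 u).
have psi_m_i_lin : linear psi_m_i by move=> a u w; rewrite /psi_m_i tr_lin hmap_lin.
exists n, (psi_m_i \o v); split => [k|x x_st].
  by rewrite /= /psi_m_i -psi_m -transE; apply: stable_sidx.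
have [z [_ ez]] := stable_lift x_st (lev_trans (lb_l k0 k3) h2).
have [c ec] := v_span (hmap R M N phi m (tr R M _ _ e1 (trans (lb k0 k3) k3 z))).
exists c; rewrite -(lin_sumZ psi_m_i_lin) -ec /psi_m_i phi_k3 -ez -(transE e2).
rewrite trans_comp // -(trans_comp z (lb_l k0 k3) h1) (transE h1) psi_phi_k0.
by rewrite -(transE h2) trans_comp.
Qed.

End ProModule.

Arguments trans {R M} i j x.
Arguments lb {R M} i j.
Arguments stable {R M} S {i} x.
#[export] Hint Resolve lev_refl lb_l lb_r sidx_le : core.

Section ProAlgebra.
Variables (R : comPzRingType) (A : proAlg R).
Local Notation M := (asys A).
Local Notation Ob i := (obj R M i).
Local Notation lev := (Defs.le R M).
Local Notation mu := (mul R A).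
Local Notation mi := (midx R A).
Local Notation un := (aunit R A).

Lemma mulBl d x y z : mu d (x - y) z = mu d x z - mu d y z.
Proof. exact: (linB (f := mu d ^~ z) (fun a x y => mul_linl R A d a x y z)). Qed.

Lemma mulBr d x y z : mu d z (x - y) = mu d z x - mu d z y.
Proof. exact: (linB (fun a x y => mul_linr R A d a x y z)). Qed.

Lemma trans_aunit d' d : lev d' d -> trans d' d (un d') = un d.
Proof. by move=> h; rewrite (transE h) aunit_compat. Qed.

Lemma mul_compat_eventually d' d : lev d' d -> eventually (fun p =>
  lev p (mi d') /\ lev p (mi d) /\
  forall a b : Ob p, trans d' d (mu d' (trans p (mi d') a) (trans p (mi d') b))
                   = mu d (trans p (mi d) a) (trans p (mi d) b)).
Proof.
move=> h; apply: (eventually_mono (germ2_eventually (mul_compat R A d d' h))).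
by move=> p [h1 _ g1 _ E]; split=> //; split=> // a b; rewrite (transE h); exact: E.
Qed.

Lemma mul_assoc_eventually d : eventually (fun p =>
  lev p (mi (mi d)) /\ lev p (mi d) /\
  forall a b c : Ob p,
    mu d (mu (mi d) (trans p _ a) (trans p _ b)) (trans p (mi d) c)
  = mu d (trans p (mi d) a) (mu (mi d) (trans p _ b) (trans p _ c))).
Proof.
apply: (eventually_mono (germ3_eventually (mul_assoc R A d))).
by move=> p [[h1 _ h3 _ _] [_ E]]; split=> //; split=> // a b c; exact: E.
Qed.

Lemma mul1l_eventually d : eventually (fun p => lev p (mi d) /\ lev p d /\
  forall a : Ob p, mu d (un (mi d)) (trans p (mi d) a) = trans p d a).
Proof. exact: germ1_eventually (mul_1l R A d). Qed.

Lemma mul1r_eventually d : eventually (fun p => lev p (mi d) /\ lev p d /\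
  forall a : Ob p, mu d (trans p (mi d) a) (un (mi d)) = trans p d a).
Proof. exact: germ1_eventually (mul_1r R A d). Qed.

Lemma mulC_eventually d : proAlg_comm A -> eventually (fun p => lev p (mi d) /\
  forall a b : Ob p, mu d (trans p (mi d) a) (trans p (mi d) b)
                   = mu d (trans p (mi d) b) (trans p (mi d) a)).
Proof.
move=> A_comm; apply: (eventually_mono (germ2_eventually (A_comm d))).
by move=> p [h1 _ _ _ E]; split=> // a b; exact: E.
Qed.

Definition base d := lb d (lb (mi d) (mi (mi d))).
Lemma base_le d : lev (base d) d. Proof. exact: lb_l. Qed.
Lemma base_le_mul d : lev (base d) (mi d).
Proof. exact: lev_trans (lb_r _ _) (lb_l _ _). Qed.
Lemma base_le_mul2 d : lev (base d) (mi (mi d)).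
Proof. exact: lev_trans (lb_r _ _) (lb_r _ _). Qed.
Local Hint Resolve base_le base_le_mul base_le_mul2 : core.

Definition sandwich d (y x w : Ob (base d)) : Ob d :=
  mu d (mu (mi d) (trans _ (mi (mi d)) y) (trans _ (mi (mi d)) x)) (trans _ (mi d) w).

Lemma sandwich_trans d p (a b c : Ob p) : lev p (base d) ->
  sandwich (trans p (base d) a) (trans p (base d) b) (trans p (base d) c)
  = mu d (mu (mi d) (trans p _ a) (trans p _ b)) (trans p (mi d) c).
Proof. by move=> hp; rewrite /sandwich !trans_comp //; apply: lev_trans hp _. Qed.

Lemma sandwich_lin d (y w : Ob (base d)) : linear (fun x => sandwich y x w).
Proof. by move=> a x x'; rewrite /sandwich trans_lin mul_linr mul_linl. Qed.

Lemma sandwich_trans_eventually d' d : lev d' d -> eventually (fun p =>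
  lev p (base d') /\ lev p (base d) /\
  forall a b c : Ob p,
    trans d' d (sandwich (trans p (base d') a) (trans p (base d') b) (trans p (base d') c))
    = sandwich (trans p (base d) a) (trans p (base d) b) (trans p (base d) c)).
Proof.
move=> h; have [j [hj1 [hj2 mul_j]]] := eventually_ex (mul_compat_eventually h).
apply: (eventually_mono (eventually_and (mul_compat_eventually hj1)
  (eventually_and (mul_compat_eventually hj2) (eventually_and (eventually_le j)
  (eventually_and (eventually_le (base d')) (eventually_le (base d))))))).
move=> p [[_ [_ mul1]] [[_ [_ mul2]] [hpj [hp1 hp2]]]].
split=> //; split=> // a b c.
rewrite !sandwich_trans // -mul1 -mul2 -(trans_comp c hpj hj1) -(trans_comp c hpj hj2).
exact: mul_j.
Qed.

Lemma sandwich_assoc_eventually d : eventually (fun p =>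
  lev p (base d) /\ lev p (mi (base d)) /\ forall a b c e : Ob p,
  let bc := mu (base d) (trans p (mi (base d)) b) (trans p (mi (base d)) c) in
  let sw := sandwich (trans p (base d) a) bc (trans p (base d) e) in
  sw = sandwich (trans p (base d) a) (trans p (base d) b)
         (mu (base d) (trans p (mi (base d)) c) (trans p (mi (base d)) e))
  /\ sw = sandwich (mu (base d) (trans p (mi (base d)) a) (trans p (mi (base d)) b))
            (trans p (base d) c) (trans p (base d) e)).
Proof.
have [j [hj1 [hj2 assoc_j]]] := eventually_ex (mul_assoc_eventually d).
apply: (eventually_mono (eventually_and (mul_compat_eventually (base_le_mul2 d))
  (eventually_and (mul_compat_eventually (base_le_mul d))
  (eventually_and (mul_assoc_eventually (mi d))
  (eventually_and (mul_compat_eventually hj1) (eventually_and (mul_compat_eventually hj2)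
  (eventually_and (eventually_le j) (eventually_le (base d))))))))).
move=> p [[hp1 [_ F1]] [[_ [_ F2]] [[_ [_ F3]] [[_ [_ F4]] [[_ [_ F5]] [hpj hpt]]]]]].
split=> //; split=> // a b c e bc sw.
have sw_eq : sw = mu d (mu (mi d) (mu (mi (mi d)) (trans p (mi (mi (mi d))) a)
    (trans p (mi (mi (mi d))) b)) (trans p (mi (mi d)) c)) (trans p (mi d) e).
  by rewrite /sw /bc /sandwich !trans_comp // F1 -F3.
split; last by rewrite sw_eq /sandwich !trans_comp // F1.
rewrite sw_eq /sandwich !trans_comp // F2 -F4.
by rewrite -(trans_comp c hpj hj1) -(trans_comp e hpj hj2) assoc_j !trans_comp // F5.
Qed.

Section StableQuotient.
Variable S : stable_index M.
Local Notation stable := (stable S).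
Local Notation s := (sidx S).

Lemma stable_aunit d : stable (un d).
Proof. by exists (un (s d)); rewrite trans_aunit. Qed.

Lemma stable_mul d (x y : Ob (mi d)) : stable x -> stable y -> stable (mu d x y).
Proof.
move=> x_st y_st.
have [p [hp1 [hp2 mul_p]]] := eventually_ex (mul_compat_eventually (sidx_le S d)).
have [a [_ <-]] := stable_lift x_st hp2; have [b [_ <-]] := stable_lift y_st hp2.
by rewrite -mul_p; apply: stable_sidx.
Qed.

Lemma stable_mul_trans d p (a b : Ob p) : stable a -> stable b -> lev p (mi d) ->
  stable (mu d (trans p (mi d) a) (trans p (mi d) b)).
Proof. by move=> a_st b_st h; apply: stable_mul; apply: stable_trans. Qed.

Local Ltac stable_side := solve [ by apply: stable_trans | by apply: stable_mul_trans
  | by apply: stable_lin | by apply: stable_aunit | by [] ].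

(* The algebra at level [d] is the quotient of the stable image at [base d]
   by its two-sided annihilator relative to [d]; it is realised as the image
   of [act], which avoids quotient types. *)
Definition stable_pair d :=
  ({y : Ob (base d) | stable y} * {w : Ob (base d) | stable w})%type.

Definition act d (x : Ob (base d)) : stable_pair d -> Ob d :=
  fun yw => sandwich (sval yw.1) x (sval yw.2).

Lemma act_lin d : linear (@act d).
Proof. by move=> a x y; apply/funext => yw; apply: sandwich_lin. Qed.

Definition act_image d (f : stable_pair d -> Ob d) := exists x, stable x /\ f = act x.

Lemma act_image0 d : act_image (0 : stable_pair d -> Ob d).
Proof. by exists 0; split; [apply: stable0 | rewrite (lin0 (@act_lin d))]. Qed.

Lemma act_image_lin d a u v : act_image u -> act_image v ->
  act_image (a *: u + v :> (stable_pair d -> Ob d)).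
Proof.
move=> [x [x_st ->]] [y [y_st ->]]; exists (a *: x + y).
by split; [apply: stable_lin | rewrite act_lin].
Qed.

Definition quot d : lmodType R := subspaceLmod (@act_image0 d) (@act_image_lin d).

Definition cls d (x : Ob (base d)) : quot d := insubd (0 : quot d) (act x).

Lemma val_cls d (x : Ob (base d)) : stable x -> val (cls x) = act x.
Proof. by move=> x_st; rewrite /cls insubdK //; apply/asboolP; exists x. Qed.

Lemma cls_surj d (f : quot d) : exists x, stable x /\ f = cls x.
Proof.
have /asboolP [x [x_st f_x]] := valP f.
by exists x; split=> //; apply: val_inj; rewrite val_cls.
Qed.

Lemma cls_lin d a (x y : Ob (base d)) : stable x -> stable y ->
  cls (a *: x + y) = a *: cls x + cls y.
Proof.
move=> x_st y_st; apply: val_inj.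
rewrite val_cls; last exact: stable_lin.
by rewrite /= !val_cls // act_lin.
Qed.

Lemma cls_eq d (x y : Ob (base d)) : stable x -> stable y ->
  act x = act y -> cls x = cls y.
Proof. by move=> x_st y_st xy; apply: val_inj; rewrite !val_cls. Qed.

Lemma cls_sumZ d n (c : 'I_n -> R) (g : 'I_n -> Ob (base d)) :
  (forall k, stable (g k)) ->
  cls (\sum_(k < n) c k *: g k) = \sum_(k < n) c k *: cls (g k).
Proof.
move=> g_st; apply: val_inj.
have val_lin : linear (val : quot d -> stable_pair d -> Ob d) by [].
rewrite (lin_sumZ val_lin) val_cls; last exact: stable_sum.
apply: etrans (lin_sumZ (@act_lin d) c g) _.
by apply: eq_bigr => k _; rewrite val_cls.
Qed.

Lemma cls_lift d (f : quot d) p : lev p (base d) ->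
  exists z : Ob p, stable z /\ f = cls (trans p (base d) z).
Proof.
move=> hp; have [x [x_st ->]] := cls_surj f.
by have [z [z_st <-]] := stable_lift x_st hp; exists z.
Qed.

Lemma act0_sandwich d (x y w : Ob (base d)) : stable y -> stable w ->
  act x = 0 -> sandwich y x w = 0.
Proof. by move=> y_st w_st /(congr1 (fun f => f (exist _ y y_st, exist _ w w_st))). Qed.

Lemma act_eq d (x y : Ob (base d)) : act (x - y) = 0 -> act x = act y.
Proof. by rewrite (linB (@act_lin d)) => /eqP; rewrite subr_eq0 => /eqP. Qed.

Lemma act_eq0_lift d p (x : Ob (base d)) : lev p (base d) ->
  (forall a e : Ob p, stable a -> stable e ->
     sandwich (trans p (base d) a) x (trans p (base d) e) = 0) -> act x = 0.
Proof.
move=> hp x0; apply/funext => -[[y y_st] [w w_st]].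
change (sandwich y x w = 0).
have [a [a_st <-]] := stable_lift y_st hp; have [e [e_st <-]] := stable_lift w_st hp.
exact: x0.
Qed.

Lemma act_ker_trans_eventually d' d : lev d' d -> eventually (fun p =>
  lev p (base d') /\ lev p (base d) /\
  forall z : Ob p, act (trans p (base d') z) = 0 -> act (trans p (base d) z) = 0).
Proof.
move=> h; apply: (eventually_mono (sandwich_trans_eventually h)).
move=> p [hp1 [hp2 sw_p]]; split=> //; split=> // z z0.
apply: (act_eq0_lift hp2) => a c a_st c_st.
rewrite -sw_p (act0_sandwich _ _ z0) ?trans0 //; exact: stable_trans.
Qed.

Lemma act_ker_ideal_eventually d : eventually (fun p =>
  lev p (base d) /\ lev p (mi (base d)) /\
  forall z z' : Ob p, stable z -> stable z' -> act (trans p (base d) z) = 0 ->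
    act (mu (base d) (trans p (mi (base d)) z) (trans p (mi (base d)) z')) = 0 /\
    act (mu (base d) (trans p (mi (base d)) z') (trans p (mi (base d)) z)) = 0).
Proof.
apply: (eventually_mono (sandwich_assoc_eventually d)).
move=> p [hp1 [hp2 sw_assoc]]; split=> //; split=> // z z' z_st z'_st z0.
split; apply: (act_eq0_lift hp1) => a e a_st e_st;
  [rewrite (sw_assoc a z z' e).1 | rewrite (sw_assoc a z' z e).2];
  by apply: (act0_sandwich _ _ z0); stable_side.
Qed.

Lemma sandwich_unit d (x : Ob (base d)) : stable x ->
  sandwich (un (base d)) x (un (base d)) = trans (base d) d x.
Proof.
move=> x_st; have [p [[hl1 [hl2 mul1l]] [[hr1 [hr2 mul1r]] hp]]] := eventually_ex
  (eventually_and (mul1l_eventually (mi d)) (eventually_and (mul1r_eventually d)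
  (eventually_le (base d)))).
have [z [_ <-]] := stable_lift x_st hp.
by rewrite /sandwich !trans_comp // !trans_aunit // mul1l mul1r.
Qed.

Definition mbase d := lb (base d) (mi (base d)).
Lemma mbase_le d : lev (mbase d) (base d). Proof. exact: lb_l. Qed.
Lemma mbase_le_mul d : lev (mbase d) (mi (base d)). Proof. exact: lb_r. Qed.

Definition tbase d' d := lb (base d') (base d).
Lemma tbase_l d' d : lev (tbase d' d) (base d'). Proof. exact: lb_l. Qed.
Lemma tbase_r d' d : lev (tbase d' d) (base d). Proof. exact: lb_r. Qed.
Local Hint Resolve mbase_le mbase_le_mul tbase_l tbase_r : core.

Definition qrep d p (f : quot d) : Ob p :=
  xget 0 (fun z => stable z /\ f = cls (trans p (base d) z)).

Lemma qrepP d p (f : quot d) : lev p (base d) ->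
  stable (qrep p f) /\ f = cls (trans p (base d) (qrep p f)).
Proof. by move=> hp; exact: xgetPex (cls_lift f hp). Qed.

Definition qmul d (f g : quot d) : quot d :=
  cls (mu (base d) (trans (mbase d) (mi (base d)) (qrep (mbase d) f))
                   (trans (mbase d) (mi (base d)) (qrep (mbase d) g))).

Definition qone d : quot d := cls (un (base d)).

Definition qtr d' d (f : quot d') : quot d :=
  cls (trans (tbase d' d) (base d) (qrep (tbase d' d) f)).
Arguments qtr : clear implicits.

Lemma cls_eq_lift d q l p (z : Ob q) (z' : Ob l) :
  lev q (base d) -> lev l (base d) -> lev p q -> lev p l -> stable z -> stable z' ->
  cls (trans q (base d) z) = cls (trans l (base d) z') ->
  exists w w' : Ob p, [/\ stable w, stable w', trans p q w = z, trans p l w' = z' &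
     act (trans p (base d) (w' - w)) = 0].
Proof.
move=> hq hl hpq hpl z_st z'_st zz'.
have [w [w_st ew]] := stable_lift z_st hpq; have [w' [w'_st ew']] := stable_lift z'_st hpl.
exists w, w'; split=> //.
rewrite transB (linB (@act_lin d)) -(trans_comp w hpq hq) -(trans_comp w' hpl hl) ew ew'.
by rewrite -!val_cls ?zz' ?subrr //; apply: stable_trans.
Qed.

Lemma qmul_cls d q (z1 z2 : Ob q) : lev q (base d) -> lev q (mi (base d)) ->
  stable z1 -> stable z2 ->
  qmul (cls (trans q (base d) z1)) (cls (trans q (base d) z2))
  = cls (mu (base d) (trans q (mi (base d)) z1) (trans q (mi (base d)) z2)).
Proof.
move=> hq hqm z1_st z2_st.
set f1 := cls (trans q (base d) z1); set f2 := cls (trans q (base d) z2).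
have [r1_st er1] := qrepP f1 (mbase_le d); have [r2_st er2] := qrepP f2 (mbase_le d).
have [p [[hp1 [hp2 ideal_p]] [hpq hpm]]] := eventually_ex (eventually_and
  (act_ker_ideal_eventually d)
  (eventually_and (eventually_le q) (eventually_le (mbase d)))).
have [w1 [w1' [w1_st w1'_st ew1 ew1' D1]]] :=
  cls_eq_lift hq (mbase_le d) hpq hpm z1_st r1_st er1.
have [w2 [w2' [w2_st w2'_st ew2 ew2' D2]]] :=
  cls_eq_lift hq (mbase_le d) hpq hpm z2_st r2_st er2.
rewrite /qmul -ew1' -ew2' -ew1 -ew2 !trans_comp //.
apply: cls_eq; try by apply: stable_mul_trans.
have [D12 _] := ideal_p _ w2' (stableB w1'_st w1_st) w2'_st D1.
have [_ D21] := ideal_p _ w1 (stableB w2'_st w2_st) w1_st D2.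
by move: D12 D21; rewrite !transB mulBl mulBr => /act_eq -> /act_eq ->.
Qed.

Lemma qtr_cls d' d q (z : Ob q) : lev d' d -> lev q (base d') -> lev q (base d) ->
  stable z -> qtr d' d (cls (trans q (base d') z)) = cls (trans q (base d) z).
Proof.
move=> h hq1 hq2 z_st; set f := cls (trans q (base d') z).
have [r_st er] := qrepP f (tbase_l d' d).
have [p [[hp1 [hp2 ker_p]] [hpq hpt]]] := eventually_ex (eventually_and
  (act_ker_trans_eventually h)
  (eventually_and (eventually_le q) (eventually_le (tbase d' d)))).
have [w [w' [w_st w'_st ew ew' D]]] := cls_eq_lift hq1 (tbase_l d' d) hpq hpt z_st r_st er.
rewrite /qtr -ew' -ew !trans_comp //.
apply: cls_eq; try by apply: stable_trans.
by apply: act_eq; rewrite -transB; apply: ker_p.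
Qed.

Lemma qmul_linl d a (x y z : quot d) : qmul (a *: x + y) z = a *: qmul x z + qmul y z.
Proof.
have [zx [x_st ->]] := cls_lift x (mbase_le d).
have [zy [y_st ->]] := cls_lift y (mbase_le d).
have [zz [z_st ->]] := cls_lift z (mbase_le d).
rewrite -cls_lin; try stable_side.
rewrite -trans_lin !qmul_cls; try stable_side.
by rewrite -cls_lin; try stable_side; rewrite trans_lin mul_linl.
Qed.

Lemma qmul_linr d a (x y z : quot d) : qmul z (a *: x + y) = a *: qmul z x + qmul z y.
Proof.
have [zx [x_st ->]] := cls_lift x (mbase_le d).
have [zy [y_st ->]] := cls_lift y (mbase_le d).
have [zz [z_st ->]] := cls_lift z (mbase_le d).
rewrite -cls_lin; try stable_side.
rewrite -trans_lin !qmul_cls; try stable_side.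
by rewrite -cls_lin; try stable_side; rewrite trans_lin mul_linr.
Qed.

Lemma qmul_assoc d (x y z : quot d) : qmul (qmul x y) z = qmul x (qmul y z).
Proof.
have [p [[hp1 [hp2 C1]] [[_ [hp3 C2]] [[hp4 [hp5 assoc_p]] hpm]]]] :=
  eventually_ex (eventually_and (mul_compat_eventually (mbase_le d))
    (eventually_and (mul_compat_eventually (mbase_le_mul d))
    (eventually_and (mul_assoc_eventually (base d)) (eventually_le (mbase d))))).
have hpb : lev p (base d) by apply: lev_trans hpm _.
have [zx [x_st ->]] := cls_lift x hpb; have [zy [y_st ->]] := cls_lift y hpb.
have [zz [z_st ->]] := cls_lift z hpb.
rewrite (qmul_cls hpb hp5 x_st y_st) (qmul_cls hpb hp5 y_st z_st) -!C1.
rewrite -(trans_comp zz hpm (mbase_le d)) -(trans_comp zx hpm (mbase_le d)).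
rewrite !qmul_cls; try stable_side.
by rewrite !C2 !trans_comp // assoc_p.
Qed.

Lemma qmul1l d (x : quot d) : qmul (qone d) x = x.
Proof.
have [p [[hp1 [hp2 mul1l]] hpm]] :=
  eventually_ex (eventually_and (mul1l_eventually (base d)) (eventually_le (mbase d))).
have hpb : lev p (base d) by apply: lev_trans hpm _.
have [z [z_st ->]] := cls_lift x hpb.
rewrite /qone -(trans_aunit hpb) qmul_cls //; last exact: stable_aunit.
by rewrite trans_aunit // mul1l.
Qed.

Lemma qmul1r d (x : quot d) : qmul x (qone d) = x.
Proof.
have [p [[hp1 [hp2 mul1r]] hpm]] :=
  eventually_ex (eventually_and (mul1r_eventually (base d)) (eventually_le (mbase d))).
have hpb : lev p (base d) by apply: lev_trans hpm _.
have [z [z_st ->]] := cls_lift x hpb.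
rewrite /qone -(trans_aunit hpb) qmul_cls //; last exact: stable_aunit.
by rewrite trans_aunit // mul1r.
Qed.

Lemma qtr_lin d' d (h : lev d' d) : linear (qtr d' d).
Proof.
move=> a x y.
have [zx [x_st ->]] := cls_lift x (tbase_l d' d).
have [zy [y_st ->]] := cls_lift y (tbase_l d' d).
rewrite -cls_lin; try stable_side.
rewrite -trans_lin !(qtr_cls h) //; last exact: stable_lin.
by rewrite trans_lin cls_lin //; apply: stable_trans.
Qed.

Lemma qtr_mul d' d (h : lev d' d) (x y : quot d') :
  qtr d' d (qmul x y) = qmul (qtr d' d x) (qtr d' d y).
Proof.
have [p [[hp1 [hp2 C1]] [[_ [hp3 C2]] [hpt [hp' hp]]]]] :=
  eventually_ex (eventually_and (mul_compat_eventually (tbase_l d' d))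
    (eventually_and (mul_compat_eventually (tbase_r d' d))
    (eventually_and (eventually_le (tbase d' d))
    (eventually_and (eventually_le (base d')) (eventually_le (base d)))))).
have [zx [x_st ->]] := cls_lift x hp'; have [zy [y_st ->]] := cls_lift y hp'.
rewrite !(qtr_cls h) //; try stable_side.
rewrite (qmul_cls hp' hp2 x_st y_st) (qmul_cls hp hp3 x_st y_st) -C1 -C2 (qtr_cls h) //.
all: stable_side.
Qed.

Lemma qtr_one d' d (h : lev d' d) : qtr d' d (qone d') = qone d.
Proof.
rewrite /qone -(trans_aunit (tbase_l d' d)) -(trans_aunit (tbase_r d' d)) (qtr_cls h) //.
exact: stable_aunit.
Qed.

Lemma qtr_id d (h : lev d d) (x : quot d) : qtr d d x = x.
Proof. by have [z [z_st ->]] := cls_lift x (lev_refl (base d)); rewrite (qtr_cls h). Qed.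

Lemma qtr_comp i j k (h1 : lev i j) (h2 : lev j k) (h3 : lev i k) (x : quot i) :
  qtr j k (qtr i j x) = qtr i k x.
Proof.
set q := lb (base i) (lb (base j) (base k)).
have qi : lev q (base i) by apply: lb_l.
have qj : lev q (base j) by apply: lev_trans (lb_r _ _) (lb_l _ _).
have qk : lev q (base k) by apply: lev_trans (lb_r _ _) (lb_r _ _).
have [z [z_st ->]] := cls_lift x qi.
by rewrite (qtr_cls h1) // (qtr_cls h2) // (qtr_cls h3).
Qed.

Lemma qtr_surj d' d (h : lev d' d) (y : quot d) : exists x, qtr d' d x = y.
Proof.
have [z [z_st ->]] := cls_lift y (tbase_r d' d).
by exists (cls (trans (tbase d' d) (base d') z)); rewrite (qtr_cls h).
Qed.

Definition qsys : algSys R :=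
  @AlgSys R (idx R M) lev (@lev_refl _ M) (@lev_trans _ M) (Defs.codir R M)
    (Defs.idx_inh R M) quot qmul qone qmul_linl qmul_linr qmul_assoc qmul1l qmul1r
    (fun i j _ => qtr i j) qtr_lin qtr_mul qtr_one qtr_id qtr_comp.

Lemma qsys_surj : alg_surj qsys.
Proof. by move=> i j h y; apply: (qtr_surj h). Qed.

Lemma qsys_comm : proAlg_comm A -> alg_comm qsys.
Proof.
move=> A_comm d x y /=.
have [p [[hp1 mulC] hpm]] :=
  eventually_ex (eventually_and (mulC_eventually (base d) A_comm)
                                (eventually_le (mbase d))).
have hpb : lev p (base d) by apply: lev_trans hpm _.
have [zx [x_st ->]] := cls_lift x hpb; have [zy [y_st ->]] := cls_lift y hpb.
by rewrite !qmul_cls // mulC.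
Qed.

Lemma qsys_fin_gen : pro_finite M -> alg_fin_gen qsys.
Proof.
move=> A_fin d; have [n [g [g_st g_span]]] := pro_finite_stable_span S A_fin (base d).
exists n, (fun k => cls (g k)) => f; have [x [x_st ->]] := cls_surj f.
by have [c ->] := g_span x x_st; exists c; rewrite cls_sumZ.
Qed.

Lemma to_qsys_lin d : linear (fun x : Ob (s (base d)) => cls (trans _ (base d) x)).
Proof. by move=> a x y; rewrite trans_lin cls_lin //; apply: stable_sidx. Qed.

Lemma to_qsys_compat j j' (h : lev j' j) : germ1 R M (quot j) (s (base j')) (s (base j))
  (fun x => qtr j' j (cls (trans (s (base j')) (base j') x)))
  (fun x => cls (trans (s (base j)) (base j) x)).
Proof.
set k := lb (s (tbase j' j)) (lb (s (base j')) (s (base j))).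
have k1 : lev k (s (base j')) by apply: lev_trans (lb_r _ _) (lb_l _ _).
have k2 : lev k (s (base j)) by apply: lev_trans (lb_r _ _) (lb_r _ _).
have ks : lev k (s (tbase j' j)) by apply: lb_l.
have kt : lev k (tbase j' j) by apply: lev_trans ks _.
exists k, k1, k2 => x; rewrite -!transE !trans_comp //; try exact: lev_trans k1 _;
  try exact: lev_trans k2 _.
rewrite -(trans_comp x kt (tbase_l j' j)) -(trans_comp x kt (tbase_r j' j)) (qtr_cls h) //.
by rewrite -(trans_comp x ks (sidx_le S _)); apply: stable_sidx.
Qed.

Definition to_qsys : proHom R M (sysOf R qsys) :=
  @ProHom R M (sysOf R qsys) (fun d => s (base d))
    (fun d x => cls (trans (s (base d)) (base d) x)) to_qsys_lin to_qsys_compat.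

Definition unit_pair d : stable_pair d :=
  (exist _ (un (base d)) (stable_aunit _), exist _ (un (base d)) (stable_aunit _)).

Lemma val_cls_unit d (x : Ob (base d)) : stable x ->
  val (cls x) (unit_pair d) = trans (base d) d x.
Proof. by move=> x_st; rewrite val_cls // -sandwich_unit. Qed.

Lemma of_qsys_compat j j' (h : lev j' j) : germ1 R (sysOf R qsys) (Ob j) j' j
  (fun f : quot j' => tr R M j' j h (val f (unit_pair j')))
  (fun f : quot j => val f (unit_pair j)).
Proof.
exists j', (lev_refl j'), h => f /=.
have [z [z_st ->]] := cls_lift f (tbase_l j' j).
rewrite -transE (qtr_cls (lev_refl j')) // (qtr_cls h) // !val_cls_unit; try stable_side.
by rewrite !trans_comp //; apply: lev_trans (base_le j') h.
Qed.

Definition of_qsys : proHom R (sysOf R qsys) M :=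
  @ProHom R (sysOf R qsys) M id (fun i (f : quot i) => val f (unit_pair i))
    (fun i a x y => erefl) of_qsys_compat.

Lemma to_qsys_inverse : proInverse R to_qsys of_qsys.
Proof.
split=> d /=.
  have hsd : lev (s (base d)) d by apply: lev_trans (sidx_le S _) (base_le d).
  exists (s (base d)), (lev_refl _), hsd => x.
  by rewrite -!transE trans_id val_cls_unit ?trans_comp //; apply: stable_sidx.
set c := s (base d); have hcb : lev c (base d) by apply: sidx_le.
have hcd : lev c d by apply: lev_trans hcb (base_le d).
exists c, (lev_refl c), hcd => f.
have [z [z_st ->]] := cls_lift f (tbase_l c d).
have hzc : lev (tbase c d) c by apply: lev_trans (tbase_l c d) (base_le c).
rewrite /= (qtr_cls (lev_refl c)) // (qtr_cls hcd) // val_cls_unit; try stable_side.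
by rewrite !trans_comp //; apply: lev_trans (base_le c) hcb.
Qed.

Lemma to_qsys_mul d : germ2 R M (quot d) (midx R A (s (base d))) (midx R A (s (base d)))
  (s (base d)) (s (base d))
  (fun x y => cls (trans (s (base d)) (base d) (mu (s (base d)) x y)))
  (fun x y => qmul (cls (trans (s (base d)) (base d) x))
                    (cls (trans (s (base d)) (base d) y))).
Proof.
set c := s (base d); have hcb : lev c (base d) by apply: sidx_le.
have [p [[hp1 [hp2 mul_p]] [hpm hpc]]] := eventually_ex (eventually_and
  (mul_compat_eventually hcb) (eventually_and (eventually_le (s (mbase d)))
  (eventually_le c))).
have hpm' : lev p (mbase d) by apply: lev_trans hpm (sidx_le S _).
exists p, hp1, hp1, hpc, hpc => x y.
have preim_st z : stable (trans p (mbase d) z).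
  by rewrite -(trans_comp z hpm (sidx_le S _)); apply: stable_sidx.
rewrite -!transE mul_p !trans_comp // -(trans_comp x hpm' (mbase_le d)).
by rewrite -(trans_comp y hpm' (mbase_le d)) qmul_cls // !trans_comp.
Qed.

Lemma to_qsys_one d : cls (trans (s (base d)) (base d) (un (s (base d)))) = qone d.
Proof. by rewrite trans_aunit. Qed.

Lemma qsys_iso : proAlgIso A qsys.
Proof.
exists to_qsys, of_qsys; split; first exact: to_qsys_inverse.
by split=> d; [apply: to_qsys_mul | apply: to_qsys_one].
Qed.

End StableQuotient.
End ProAlgebra.

Theorem theorem2p30 (R : comPzRingType) (A : proAlg R) :
  mittag_leffler (asys A) ->
  (exists B : algSys R, alg_surj B /\ proAlgIso A B)
  /\ (pro_finite (asys A) ->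
        exists B : algSys R, alg_surj B /\ alg_fin_gen B /\ proAlgIso A B)
  /\ (proAlg_comm A ->
        exists B : algSys R, alg_surj B /\ alg_comm B /\ proAlgIso A B)
  /\ (proAlg_comm A -> pro_finite (asys A) ->
        exists B : algSys R,
          alg_surj B /\ alg_comm B /\ alg_fin_gen B /\ proAlgIso A B).
Proof.
move=> /mittag_leffler_stable_index [S].
have surj := @qsys_surj _ _ S; have iso := qsys_iso S.
have fin := @qsys_fin_gen _ _ S; have comm := @qsys_comm _ _ S.
split; [|split; [|split]] => [|A_fin|A_comm|A_comm A_fin]; exists (qsys S).
- by [].
- by split; [|split; [apply: fin|]].
- by split; [|split; [apply: comm|]].
- by split; [|split; [apply: comm | split; [apply: fin|]]].
Qed.
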